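(* Let $I,J\subset\mathbb{R}$ be open intervals and $f\colon I\to\mathbb{R}$, $g\colon J\to\mathbb{R}$ smooth functions, let $\alpha(s)=(s,0,f(s))$ (a curve in the plane $\{y=0\}$) and $\beta(t)=(0,t,g(t))$ (a curve in the plane $\{x=0\}$), and consider the translation surface $$x(s,t)=\alpha(s)\ast\beta(t)=(s,\,t\,e^{f(s)},\,f(s)+g(t)),\qquad (s,t)\in I\times J,$$ in $\mathrm{Sol}_3$. This surface is minimal in each of the following cases: (1) $f\equiv a$ is constant and $g(t)=\log|t+\lambda|+\mu$ for constants $\lambda,\mu$ (with $-\lambda\notin J$); (2) $f(s)=-\log|s+\lambda|+\mu$ for constants $\lambda,\mu$ (with $-\lambda\notin I$) and $g\equiv a$ is constant; (3) $g(t)=\log|t|+\mu$ for a constant $\mu$ (with $0\notin J$) and $f$ is an arbitrary smooth function; (4) $f$ and $g$ are both constant (the surface is a piece of a plane $z=z_0$). Moreover, the planes $x=x_0$ are minimal translation surfaces of type III (obtained with $\alpha(s)=(x_0,0,s)$ and $\beta(t)=(0,t,g(t))$, $g$ arbitrary).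
   Context: $\mathrm{Sol}_3$ is $\mathbb{R}^3$ with coordinates $(x,y,z)$, the Riemannian metric $e^{2z}dx^2+e^{-2z}dy^2+dz^2$, and the Lie group operation $(x,y,z)\ast(x',y',z')=(x+e^{-z}x',\,y+e^{z}y',\,z+z')$, for which the metric is left-invariant. A translation surface $M(\alpha,\beta)$ is a surface parametrized by $x(s,t)=\alpha(s)\ast\beta(t)$ where $\alpha,\beta$ are curves lying in coordinate planes of $\mathbb{R}^3$; it is of type III if $\alpha\subset\{y=0\}$ and $\beta\subset\{x=0\}$. A surface is minimal if its mean curvature (half the trace of the Weingarten map, computed with the Levi-Civita connection of the metric above) vanishes identically. *)

From Stdlib Require Import Reals Lra.
Open Scope R_scope.

Definition V3 : Type := (R * R * R)%type.

Definition comp (v : V3) (k : nat) : R :=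
  match v with (a, b, c) =>
    match k with 0%nat => a | 1%nat => b | _ => c end end.

Definition zc (p : V3) : R := comp p 2.

Definition sum3 (F : nat -> R) : R := F 0%nat + F 1%nat + F 2%nat.

Definition sol_mul (p q : V3) : V3 :=
  match p, q with (x, y, z), (x', y', z') =>
    (x + exp (- z) * x', y + exp z * y', z + z') end.

Definition gm (p : V3) (i j : nat) : R :=
  match i, j with
  | 0%nat, 0%nat => exp (2 * zc p)
  | 1%nat, 1%nat => exp (- (2 * zc p))
  | 2%nat, 2%nat => 1
  | _, _ => 0 end.

Definition ginv (p : V3) (i j : nat) : R :=
  match i, j with
  | 0%nat, 0%nat => exp (- (2 * zc p))
  | 1%nat, 1%nat => exp (2 * zc p)
  | 2%nat, 2%nat => 1
  | _, _ => 0 end.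

(* Partial derivatives d_l g_ij(p) (only d_z is nonzero). *)
Definition dgm (l : nat) (p : V3) (i j : nat) : R :=
  match l with
  | 2%nat =>
    match i, j with
    | 0%nat, 0%nat => 2 * exp (2 * zc p)
    | 1%nat, 1%nat => - (2 * exp (- (2 * zc p)))
    | _, _ => 0 end
  | _ => 0 end.

Definition christoffel (p : V3) (k i j : nat) : R :=
  / 2 * sum3 (fun l => ginv p k l * (dgm i p j l + dgm j p i l - dgm l p i j)).

Definition ip (p : V3) (u v : V3) : R :=
  sum3 (fun i => sum3 (fun j => gm p i j * comp u i * comp v j)).

Definition mkV (F : nat -> R) : V3 := (F 0%nat, F 1%nat, F 2%nat).

(* Covariant derivative along the surface:
   (nabla_{X_a} X_b)^k = X_ab^k + Gamma^k_ij X_a^i X_b^j. *)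
Definition cov (p : V3) (Xa Xb Xab : V3) : V3 :=
  mkV (fun k => comp Xab k +
         sum3 (fun i => sum3 (fun j => christoffel p k i j * comp Xa i * comp Xb j))).

Definition cross (u v : V3) : V3 :=
  mkV (fun k => match k with
        | 0%nat => comp u 1 * comp v 2 - comp u 2 * comp v 1
        | 1%nat => comp u 2 * comp v 0 - comp u 0 * comp v 2
        | _ => comp u 0 * comp v 1 - comp u 1 * comp v 0 end).

(* A normal vector: nu^k = g^kl (Xs x Xt)_l, which is g-orthogonal to Xs, Xt. *)
Definition normal_vec (p : V3) (Xs Xt : V3) : V3 :=
  mkV (fun k => sum3 (fun l => ginv p k l * comp (cross Xs Xt) l)).

Definition unit_normal (p : V3) (Xs Xt : V3) : V3 :=
  let nu := normal_vec p Xs Xt in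
  let n := sqrt (ip p nu nu) in
  mkV (fun k => comp nu k / n).

(* Mean curvature at a point, from the point p = X(s,t), first partials Xs Xt
   and second partials Xss Xst Xtt:
   H = (E n - 2 F m + G l) / (2 (E G - F^2)), l,m,n the second fundamental form
   w.r.t. the unit normal (half the trace of the Weingarten map). *)
Definition first_E (p Xs Xt : V3) := ip p Xs Xs.
Definition first_F (p Xs Xt : V3) := ip p Xs Xt.
Definition first_G (p Xs Xt : V3) := ip p Xt Xt.

Definition mean_curv (p Xs Xt Xss Xst Xtt : V3) : R :=
  let N := unit_normal p Xs Xt in
  let E := ip p Xs Xs in
  let F := ip p Xs Xt in
  let G := ip p Xt Xt in
  let l := ip p (cov p Xs Xs Xss) N in
  let m := ip p (cov p Xs Xt Xst) N in
  let n := ip p (cov p Xt Xt Xtt) N in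
  (E * n - 2 * F * m + G * l) / (2 * (E * G - F * F)).

Definition is_pd_s (X Y : R -> R -> V3) (U : R -> R -> Prop) : Prop :=
  forall s t, U s t -> forall k : nat,
    derivable_pt_lim (fun s' => comp (X s' t) k) s (comp (Y s t) k).
Definition is_pd_t (X Y : R -> R -> V3) (U : R -> R -> Prop) : Prop :=
  forall s t, U s t -> forall k : nat,
    derivable_pt_lim (fun t' => comp (X s t') k) t (comp (Y s t) k).

Definition regular_at (p Xs Xt : V3) : Prop :=
  ip p Xs Xs * ip p Xt Xt - ip p Xs Xt * ip p Xs Xt <> 0.

Definition minimal_on (X : R -> R -> V3) (U : R -> R -> Prop) : Prop :=
  exists Xs Xt Xss Xst Xtt : R -> R -> V3,
    is_pd_s X Xs U /\ is_pd_t X Xt U /\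
    is_pd_s Xs Xss U /\ is_pd_t Xs Xst U /\ is_pd_t Xt Xtt U /\
    forall s t, U s t -> regular_at (X s t) (Xs s t) (Xt s t) ->
      mean_curv (X s t) (Xs s t) (Xt s t) (Xss s t) (Xst s t) (Xtt s t) = 0.

Definition is_open_interval (I : R -> Prop) : Prop :=
  (exists x, I x) /\
  (forall x y z, I x -> I z -> x <= y <= z -> I y) /\
  (forall x, I x -> exists e, 0 < e /\ forall y, Rabs (y - x) < e -> I y).

Definition smooth_on (f : R -> R) (I : R -> Prop) : Prop :=
  exists D : nat -> R -> R, D 0%nat = f /\
    forall n x, I x -> derivable_pt_lim (D n) x (D (S n) x).

Definition rect (I J : R -> Prop) : R -> R -> Prop := fun s t => I s /\ J t.

Definition transl_surface (f g : R -> R) : R -> R -> V3 :=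
  fun s t => sol_mul (s, 0, f s) (0, t, g t).

From Pilot Require Import Defs.
From Stdlib Require Import Reals Lra.
Open Scope R_scope.

(* For x(s,t) = (s, t e^f(s), f(s) + g(t)) the numerator of the mean curvature factors as
     e^f [ (g'' + g'^2) P + (1 - t g') ((f'' - f'^2) Q + 2 f'^2 g' S) ]
   with explicit P, Q, S.  Hence the surface is minimal as soon as e^g is affine
   (g'' + g'^2 = 0) and either t g' = 1, or e^(-f) is affine (f'' = f'^2) and f' g' = 0;
   the four profiles of the statement solve these equations.  For the planes x = x0 the
   numerator vanishes identically. *)

Lemma derivable_pt_lim_eq_value f x l l' :
  derivable_pt_lim f x l -> l = l' -> derivable_pt_lim f x l'.
Proof. now intros H <-. Qed.

Lemma derivable_pt_lim_Rinv x : x <> 0 -> derivable_pt_lim Rinv x (- / x ^ 2).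
Proof.
  intros Hx.
  apply derivable_pt_lim_ext with (f := fun y => 1 / y); [intros; unfold Rdiv; ring|].
  eapply derivable_pt_lim_eq_value.
  - apply (derivable_pt_lim_div (fun _ => 1) (fun y => y));
      [apply derivable_pt_lim_const | apply derivable_pt_lim_id | exact Hx].
  - unfold Rsqr; field; exact Hx.
Qed.

Lemma derivable_pt_lim_ln_Rabs x : x <> 0 -> derivable_pt_lim (fun y => ln (Rabs y)) x (/ x).
Proof.
  intros Hx.
  assert (Habs : 0 < Rabs x) by now apply Rabs_pos_lt.
  destruct (Rlt_or_le 0 x) as [Hpos | Hneg].
  - eapply derivable_pt_lim_eq_value.
    + apply (derivable_pt_lim_comp Rabs ln);
        [apply Rabs_derive_1, Hpos | apply derivable_pt_lim_ln, Habs].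
    + rewrite Rabs_pos_eq by lra; field; exact Hx.
  - eapply derivable_pt_lim_eq_value.
    + apply (derivable_pt_lim_comp Rabs ln);
        [apply Rabs_derive_2; lra | apply derivable_pt_lim_ln, Habs].
    + rewrite Rabs_left by lra; field; exact Hx.
Qed.

Lemma derivable_pt_lim_on_open_interval U f h x l :
  is_open_interval U -> (forall y, U y -> f y = h y) -> U x ->
  derivable_pt_lim h x l -> derivable_pt_lim f x l.
Proof.
  intros [_ [_ Hopen]] Hfh Hx Hh.
  destruct (Hopen x Hx) as [e [He Hball]].
  apply (derivable_pt_lim_locally_ext h f x (x - e) (x + e)); [lra | | exact Hh].
  intros z Hz; symmetry; apply Hfh, Hball, Rabs_def1; lra.
Qed.

Lemma derivable_pt_lim_const_on_open_interval U f a x :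
  is_open_interval U -> (forall y, U y -> f y = a) -> U x -> derivable_pt_lim f x 0.
Proof.
  intros HU Hf Hx.
  apply (derivable_pt_lim_on_open_interval U f (fun _ => a)); auto.
  apply derivable_pt_lim_const.
Qed.

Lemma shift_nonzero (U : R -> Prop) c x : ~ U (- c) -> U x -> x + c <> 0.
Proof. intros Hc Hx E; apply Hc; replace (- c) with x by lra; exact Hx. Qed.

(* Computes the derivative as an evar; non-elementary leaves come from the hypotheses. *)
Ltac derive_rec :=
  lazymatch goal with
  | |- derivable_pt_lim (fun y => y) _ _ => apply derivable_pt_lim_id
  | |- derivable_pt_lim (fun _ => ?c) _ _ => apply derivable_pt_lim_const
  | |- derivable_pt_lim (fun y => @?u y + @?v y) _ _ =>
      apply (derivable_pt_lim_plus u v); derive_rec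
  | |- derivable_pt_lim (fun y => @?u y * @?v y) _ _ =>
      apply (derivable_pt_lim_mult u v); derive_rec
  | |- derivable_pt_lim (fun y => - @?u y) _ _ =>
      apply (derivable_pt_lim_opp u); derive_rec
  | |- derivable_pt_lim (fun y => exp (@?u y)) _ _ =>
      apply (derivable_pt_lim_comp u exp); [derive_rec | apply derivable_pt_lim_exp]
  | |- derivable_pt_lim (fun y => ln (Rabs (@?u y))) _ _ =>
      apply (derivable_pt_lim_comp u (fun y => ln (Rabs y)));
      [derive_rec | apply derivable_pt_lim_ln_Rabs]
  | |- derivable_pt_lim (fun y => / @?u y) _ _ =>
      apply (derivable_pt_lim_comp u Rinv); [derive_rec | apply derivable_pt_lim_Rinv]
  | _ => eauto
  end.

Ltac derive := eapply derivable_pt_lim_eq_value; [derive_rec | cbv beta].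

Lemma mean_curv_transl_surface (f g : R -> R) (f1 f2 g1 g2 s t : R) :
  g2 + g1 ^ 2 = 0 -> t * g1 = 1 \/ (f2 = f1 ^ 2 /\ f1 * g1 = 0) ->
  mean_curv (transl_surface f g s t)
    (1, t * f1 * exp (f s), f1) (0, exp (f s), g1)
    (0, t * (f2 + f1 ^ 2) * exp (f s), f2) (0, f1 * exp (f s), 0) (0, 0, g2) = 0.
Proof.
  intros Hg Hfg.
  unfold mean_curv, unit_normal, normal_vec, cross, cov, christoffel, ip, mkV, sum3,
    gm, ginv, dgm, zc, transl_surface, sol_mul; cbv beta iota zeta delta [Defs.comp].
  assert (Hz : exp (2 * (f s + g t)) = exp (f s) ^ 2 * exp (g t) ^ 2).
  { replace (2 * (f s + g t)) with (f s + f s + (g t + g t)) by ring.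
    rewrite !exp_plus; ring. }
  rewrite exp_Ropp, Hz.
  set (e := exp (f s)). set (eg := exp (g t)).
  assert (e <> 0) by apply Rgt_not_eq, exp_pos.
  assert (eg <> 0) by apply Rgt_not_eq, exp_pos.
  unfold Rdiv. set (q := / sqrt _).
  match goal with |- ?N * _ = 0 =>
    replace N with (q * e * ((g2 + g1 ^ 2) * (e ^ 2 * eg ^ 2 + f1 ^ 2 * (1 + t ^ 2 / eg ^ 2))
        + (1 - t * g1) * ((f2 - f1 ^ 2) * (/ eg ^ 2 + g1 ^ 2)
                          + 2 * f1 ^ 2 * g1 * (g1 + t / eg ^ 2))))
      by (field; auto)
  end.
  rewrite Hg. destruct Hfg as [Htg | [Hf2 Hfg]].
  - replace (1 - t * g1) with 0 by lra. ring.
  - rewrite Hf2. replace (2 * f1 ^ 2 * g1) with (2 * f1 * (f1 * g1)) by ring.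
    rewrite Hfg. ring.
Qed.

Lemma transl_surface_minimal I J (f f' f'' g g' g'' : R -> R) :
  (forall s, I s -> derivable_pt_lim f s (f' s)) ->
  (forall s, I s -> derivable_pt_lim f' s (f'' s)) ->
  (forall t, J t -> derivable_pt_lim g t (g' t)) ->
  (forall t, J t -> derivable_pt_lim g' t (g'' t)) ->
  (forall t, J t -> g'' t + g' t ^ 2 = 0) ->
  (forall s t, I s -> J t -> t * g' t = 1 \/ (f'' s = f' s ^ 2 /\ f' s * g' t = 0)) ->
  minimal_on (transl_surface f g) (rect I J).
Proof.
  intros Hf Hf' Hg Hg' Hriccati Hcase.
  exists (fun s t => (1, t * f' s * exp (f s), f' s)),
         (fun s t => (0, exp (f s), g' t)),
         (fun s t => (0, t * (f'' s + f' s ^ 2) * exp (f s), f'' s)),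
         (fun s t => (0, f' s * exp (f s), 0)),
         (fun s t => (0, 0, g'' t)).
  repeat split;
    try (intros s t [Hs Ht] k; destruct k as [| [| k]];
         cbv beta iota delta [transl_surface sol_mul Defs.comp]; derive; ring).
  intros s t [Hs Ht] _. apply mean_curv_transl_surface; auto.
Qed.

Lemma mean_curv_vertical_plane x0 s t z g1 g2 :
  mean_curv (sol_mul (x0, 0, s) (0, t, z))
    (0, t * exp s, 1) (0, exp s, g1) (0, t * exp s, 0) (0, exp s, 0) (0, 0, g2) = 0.
Proof.
  unfold mean_curv, unit_normal, normal_vec, cross, cov, christoffel, ip, mkV, sum3,
    gm, ginv, dgm, zc, sol_mul; cbv beta iota zeta delta [Defs.comp].
  unfold Rdiv.
  match goal with |- ?N * _ = 0 => replace N with 0 by ring end.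
  ring.
Qed.

Lemma vertical_plane_minimal x0 I J (g g' g'' : R -> R) :
  (forall t, J t -> derivable_pt_lim g t (g' t)) ->
  (forall t, J t -> derivable_pt_lim g' t (g'' t)) ->
  minimal_on (fun s t => sol_mul (x0, 0, s) (0, t, g t)) (rect I J).
Proof.
  intros Hg Hg'.
  exists (fun s t => (0, t * exp s, 1)), (fun s t => (0, exp s, g' t)),
         (fun s t => (0, t * exp s, 0)), (fun s t => (0, exp s, 0)),
         (fun s t => (0, 0, g'' t)).
  repeat split;
    try (intros s t [Hs Ht] k; destruct k as [| [| k]];
         cbv beta iota delta [sol_mul Defs.comp]; derive; ring).
  intros s t _ _. apply mean_curv_vertical_plane.
Qed.

Lemma minimal_const_log (I J : R -> Prop) (f g : R -> R) (a lam mu : R) :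
  is_open_interval I -> is_open_interval J -> ~ J (- lam) ->
  (forall s, I s -> f s = a) ->
  (forall t, J t -> g t = ln (Rabs (t + lam)) + mu) ->
  minimal_on (transl_surface f g) (rect I J).
Proof.
  intros HI HJ Hlam Hf Hg.
  apply (transl_surface_minimal I J f (fun _ => 0) (fun _ => 0)
           g (fun t => / (t + lam)) (fun t => - / (t + lam) ^ 2)).
  - intros s Hs. exact (derivable_pt_lim_const_on_open_interval I f a _ HI Hf Hs).
  - intros s _. apply derivable_pt_lim_const.
  - intros t Ht. pose proof (shift_nonzero J lam t Hlam Ht).
    apply (derivable_pt_lim_on_open_interval J g (fun y => ln (Rabs (y + lam)) + mu)); auto.
    derive; auto. field; auto.
  - intros t Ht. pose proof (shift_nonzero J lam t Hlam Ht).
    derive; auto. field; auto.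
  - intros t Ht. pose proof (shift_nonzero J lam t Hlam Ht). field; auto.
  - intros s t _ _. right. split; ring.
Qed.

Lemma minimal_neg_log_const (I J : R -> Prop) (f g : R -> R) (a lam mu : R) :
  is_open_interval I -> is_open_interval J -> ~ I (- lam) ->
  (forall s, I s -> f s = - ln (Rabs (s + lam)) + mu) ->
  (forall t, J t -> g t = a) ->
  minimal_on (transl_surface f g) (rect I J).
Proof.
  intros HI HJ Hlam Hf Hg.
  apply (transl_surface_minimal I J f (fun s => - / (s + lam)) (fun s => / (s + lam) ^ 2)
           g (fun _ => 0) (fun _ => 0)).
  - intros s Hs. pose proof (shift_nonzero I lam s Hlam Hs).
    apply (derivable_pt_lim_on_open_interval I f (fun y => - ln (Rabs (y + lam)) + mu)); auto.
    derive; auto. field; auto.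
  - intros s Hs. pose proof (shift_nonzero I lam s Hlam Hs).
    derive; auto. field; auto.
  - intros t Ht. exact (derivable_pt_lim_const_on_open_interval J g a _ HJ Hg Ht).
  - intros t _. apply derivable_pt_lim_const.
  - intros t _. ring.
  - intros s t Hs _. pose proof (shift_nonzero I lam s Hlam Hs).
    right. split; [field; auto | ring].
Qed.

Lemma minimal_any_log (I J : R -> Prop) (f g : R -> R) (mu : R) :
  is_open_interval J -> smooth_on f I -> ~ J 0 ->
  (forall t, J t -> g t = ln (Rabs t) + mu) ->
  minimal_on (transl_surface f g) (rect I J).
Proof.
  intros HJ [D [HD0 HD]] H0 Hg.
  assert (Hnz : forall t, J t -> t <> 0) by (intros t Ht E; subst; auto).
  apply (transl_surface_minimal I J f (D 1%nat) (D 2%nat)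
           g (fun t => / t) (fun t => - / t ^ 2)).
  - rewrite <- HD0. auto.
  - auto.
  - intros t Ht. pose proof (Hnz t Ht).
    apply (derivable_pt_lim_on_open_interval J g (fun y => ln (Rabs y) + mu)); auto.
    derive; auto. field; auto.
  - intros t Ht. pose proof (Hnz t Ht).
    derive; auto. field; auto.
  - intros t Ht. pose proof (Hnz t Ht). field; auto.
  - intros s t _ Ht. pose proof (Hnz t Ht). left. field; auto.
Qed.

Lemma minimal_const_const (I J : R -> Prop) (f g : R -> R) (a b : R) :
  is_open_interval I -> is_open_interval J ->
  (forall s, I s -> f s = a) -> (forall t, J t -> g t = b) ->
  minimal_on (transl_surface f g) (rect I J).
Proof.
  intros HI HJ Hf Hg.
  apply (transl_surface_minimal I J f (fun _ => 0) (fun _ => 0) g (fun _ => 0) (fun _ => 0)).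
  - intros s Hs. exact (derivable_pt_lim_const_on_open_interval I f a _ HI Hf Hs).
  - intros s _. apply derivable_pt_lim_const.
  - intros t Ht. exact (derivable_pt_lim_const_on_open_interval J g b _ HJ Hg Ht).
  - intros t _. apply derivable_pt_lim_const.
  - intros t _. ring.
  - intros s t _ _. right. split; ring.
Qed.

Theorem mainTheorem3 :
  (forall (I J : R -> Prop) (f g : R -> R) (a lam mu : R),
     is_open_interval I -> is_open_interval J -> smooth_on f I -> smooth_on g J ->
     ~ J (- lam) ->
     (forall s, I s -> f s = a) ->
     (forall t, J t -> g t = ln (Rabs (t + lam)) + mu) ->
     minimal_on (transl_surface f g) (rect I J)) /\
  (forall (I J : R -> Prop) (f g : R -> R) (a lam mu : R),
     is_open_interval I -> is_open_interval J -> smooth_on f I -> smooth_on g J ->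
     ~ I (- lam) ->
     (forall s, I s -> f s = - ln (Rabs (s + lam)) + mu) ->
     (forall t, J t -> g t = a) ->
     minimal_on (transl_surface f g) (rect I J)) /\
  (forall (I J : R -> Prop) (f g : R -> R) (mu : R),
     is_open_interval I -> is_open_interval J -> smooth_on f I -> smooth_on g J ->
     ~ J 0 ->
     (forall t, J t -> g t = ln (Rabs t) + mu) ->
     minimal_on (transl_surface f g) (rect I J)) /\
  (forall (I J : R -> Prop) (f g : R -> R) (a b : R),
     is_open_interval I -> is_open_interval J -> smooth_on f I -> smooth_on g J ->
     (forall s, I s -> f s = a) ->
     (forall t, J t -> g t = b) ->
     minimal_on (transl_surface f g) (rect I J)) /\
  (forall (x0 : R) (I J : R -> Prop) (g : R -> R),
     is_open_interval I -> is_open_interval J -> smooth_on g J ->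
     minimal_on (fun s t => sol_mul (x0, 0, s) (0, t, g t)) (rect I J)).
Proof.
  repeat split.
  - intros I J f g a lam mu HI HJ _ _. exact (minimal_const_log I J f g a lam mu HI HJ).
  - intros I J f g a lam mu HI HJ _ _. exact (minimal_neg_log_const I J f g a lam mu HI HJ).
  - intros I J f g mu _ HJ Hf _. exact (minimal_any_log I J f g mu HJ Hf).
  - intros I J f g a b HI HJ _ _. exact (minimal_const_const I J f g a b HI HJ).
  - intros x0 I J g _ _ [D [HD0 HD]].
    apply (vertical_plane_minimal x0 I J g (D 1%nat) (D 2%nat)); [rewrite <- HD0 |]; auto.
Qed.
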